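(* Let $M := \langle X \mid R\rangle$ where $X$ is finite, and suppose that $M$ is normalizing, cancellative, and BF. Then $M$ has accepted elasticity.
   Context: For a set $X$, $\langle X\rangle$ is the free monoid on $X$ (identity $1$); $M=\langle X\mid R\rangle$ is the monoid presented by generators $X$ and relations $R\subseteq\langle X\rangle\times\langle X\rangle$. $|a|$ is word length; $a=_M b$ means equal images in $M$. $M$ is normalizing if $aM=Ma$ for all $a\in M$; cancellative if $ab=ac$ or $ba=ca$ implies $b=c$. $\mathsf{L}_M(a):=\{|b| : b\in\langle X\rangle,\ b=_M a\}$, $\mathcal{L}(M):=\{\mathsf{L}_M(a): a\in\langle X\rangle\}$; $M$ is BF if every $\mathsf{L}_M(a)$ is finite. For $L\subseteq\mathbb{N}$, $\rho(L):=\sup(L\cap\mathbb{N}^+)/\min(L\cap\mathbb{N}^+)$ if $L\cap\mathbb{N}^+\ne\emptyset$, and $\rho(L):=0$ otherwise; $\rho(M):=\sup\{\rho(L): L\in\mathcal{L}(M)\}$. $M$ has accepted elasticity if $\rho(M)=\rho(L)<\infty$ for some $L\in\mathcal{L}(M)$. *)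

From HB Require Import structures.
From mathcomp Require Import all_boot all_order all_algebra.
From mathcomp Require Import boolp classical_sets cardinality reals constructive_ereal ereal.
From mathcomp Require Import Rstruct.
Set Implicit Arguments. Unset Strict Implicit. Unset Printing Implicit Defensive.
Import Order.TTheory GRing.Theory Num.Theory.

(* Words over the (finite) alphabet T are elements of the free monoid <X> = seq T,
   with concatenation ++ and identity [::].  A set of relations is a binary
   relation on words (possibly infinite). *)

Inductive presEq (T : Type) (R : seq T -> seq T -> Prop) : seq T -> seq T -> Prop :=
  | presEq_refl a : presEq R a a
  | presEq_sym a b : presEq R a b -> presEq R b a
  | presEq_trans a b c : presEq R a b -> presEq R b c -> presEq R a c
  | presEq_rel u v a b : R a b -> presEq R (u ++ a ++ v) (u ++ b ++ v).

Definition normalizing (T : Type) (R : seq T -> seq T -> Prop) : Prop :=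
  forall a : seq T,
    (forall m, exists m', presEq R (a ++ m) (m' ++ a)) /\
    (forall m, exists m', presEq R (m ++ a) (a ++ m')).

Definition cancellative (T : Type) (R : seq T -> seq T -> Prop) : Prop :=
  forall a b c : seq T,
    (presEq R (a ++ b) (a ++ c) -> presEq R b c) /\
    (presEq R (b ++ a) (c ++ a) -> presEq R b c).

Definition lengthSet (T : Type) (R : seq T -> seq T -> Prop) (a : seq T) : set nat :=
  [set n | exists b : seq T, presEq R b a /\ size b = n].

Definition BF (T : Type) (R : seq T -> seq T -> Prop) : Prop :=
  forall a : seq T, finite_set (lengthSet R a).

Local Open Scope classical_set_scope.
Local Open Scope ring_scope.
Local Open Scope ereal_scope.

(* rho(L) := sup (L ∩ N+) / min (L ∩ N+) if L ∩ N+ <> ∅, and 0 otherwise,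
   valued in the extended reals (the sup may be +oo). The minimum of a nonempty
   set of naturals is its infimum. *)
Definition rho (L : set nat) : \bar Rdefinitions.R :=
  let S := [set (n%:R)%:E | n in [set n | L n /\ (0 < n)%N]] in
  if pselect (exists n, L n /\ (0 < n)%N)
  then ereal_sup S * ((fine (ereal_inf S))^-1)%:E
  else 0.

Definition elasticity (T : Type) (R : seq T -> seq T -> Prop) : \bar Rdefinitions.R :=
  ereal_sup [set rho (lengthSet R a) | a in [set: seq T]].

Definition accepted_elasticity (T : Type) (R : seq T -> seq T -> Prop) : Prop :=
  exists a : seq T, elasticity R = rho (lengthSet R a) /\ elasticity R < +oo.

From mathcomp Require Import all_boot all_order all_algebra.
From mathcomp Require Import boolp classical_sets cardinality.
From mathcomp Require Import reals constructive_ereal ereal Rstruct zify.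
Import Order.TTheory GRing.Theory Num.Theory.
Set Implicit Arguments. Unset Strict Implicit. Unset Printing Implicit Defensive.

(* Normalizing and cancellative give, for each word w and letter x, a word z
   with z w = w x in M, and BF bounds |z| by a constant C.  Reading a word u
   letter by letter thus encodes it as a sequence of words of length <= C (its
   "twists"), and an embedding of the twist sequence of u into that of u'
   yields u' = u p in M with |u'| = |u| + |p|.  For pairs of equal words,
   Higman's lemma on the twist sequences gives, in any infinite sequence of
   pairs (u_n, v_n), indices i < j with u_j = u_i p, v_j = v_i q, and p = q by
   cancellativity.  The length ratios |u| / |v| therefore have a maximum: a
   sequence of pairs of increasing ratios and minimal size would otherwise
   produce, as (p, q), a better and shorter pair.  A maximizing pair (u_0, v_0)
   then realizes rho(M) as rho(L_M(u_0)). *)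

Lemma finite_infinitely_often (T : finType) (h : nat -> T) :
  exists a, forall N, exists2 n, N <= n & h n = a.
Proof.
apply: contrapT => /forallNP noa.
have /choice[B hB] : forall a, exists N, forall n, N <= n -> h n != a.
  move=> a; have /existsNP[N hN] := noa a.
  by exists N => n Nn; apply/eqP => hna; apply: hN; exists n.
by have := hB (h (\max_a B a)) _ (leq_bigmax _); rewrite eqxx.
Qed.

Lemma infinitely_often_subseq (P : nat -> Prop) :
  (forall N, exists2 n, N <= n & P n) ->
  exists phi : nat -> nat, {homo phi : m n / m < n} /\ forall k, P (phi k).
Proof.
move=> Pinf; have /choice[nx nxP] : forall N, exists n, N <= n /\ P n.
  by move=> N; have [n] := Pinf N; exists n.
pose phi k := iter k (fun m => nx m.+1) (nx 0).
exists phi; split; last by case=> [|k]; [exact: (nxP 0).2 | exact: (nxP _).2].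
by apply: homo_ltn => [y x z|k]; [exact: ltn_trans | exact: (nxP _).1].
Qed.

Section Higman.
Variable T : finType.
Implicit Types (f g : nat -> seq T) (l : seq (seq T)) (w : seq T).

Definition bad f := forall i j, i < j -> ~~ subseq (f i) (f j).

Lemma bad_neq_nil f n : bad f -> f n != [::].
Proof.
by move=> fbad; apply: contraNneq (fbad n n.+1 (ltnSn n)) => ->; exact: sub0seq.
Qed.

Definition bad_prefix l :=
  exists2 g, bad g & forall i, i < size l -> g i = nth [::] l i.

Lemma bad_prefix_rcons_min l : bad_prefix l -> exists w, bad_prefix (rcons l w) /\
  forall w', bad_prefix (rcons l w') -> size w <= size w'.
Proof.
move=> [g gbad gl].
have extP : exists n, `[< exists w, size w = n /\ bad_prefix (rcons l w) >].
  exists (size (g (size l))); apply/asboolP; exists (g (size l)); split => //.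
  exists g => // i; rewrite size_rcons ltnS leq_eqVlt nth_rcons.
  by case/orP => [/eqP->|il]; rewrite ?ltnn ?eqxx // il gl.
case: (ex_minnP extP) => n /asboolP [w [<- wbad]] wmin.
by exists w; split => // w' w'bad; apply/wmin/asboolP; exists w'.
Qed.

Lemma minimal_bad_seq f : bad f -> exists2 F, bad F &
  forall n g, bad g -> (forall i, i < n -> g i = F i) -> size (F n) <= size (g n).
Proof.
move=> fbad.
have /choice[next nextP] : forall l, exists w, bad_prefix l ->
    bad_prefix (rcons l w) /\ forall w', bad_prefix (rcons l w') -> size w <= size w'.
  move=> l; have [/bad_prefix_rcons_min[w hw]|nl] := pselect (bad_prefix l).
    by exists w.
  by exists [::].
pose pre n := iter n (fun l => rcons l (next l)) [::].
have size_pre n : size (pre n) = n by elim: n => //= n IH; rewrite size_rcons IH.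
have nth_pre m i : i < m -> nth [::] (pre m) i = next (pre i).
  elim: m => // m IH; rewrite ltnS leq_eqVlt /= nth_rcons size_pre.
  by case/orP => [/eqP->|im]; rewrite ?ltnn ?eqxx // im IH.
have bad_pre n : bad_prefix (pre n).
  by elim: n => [|n IH]; [exists f | exact: (nextP _ IH).1].
exists (fun n => next (pre n)).
  move=> i j ij; have [g gbad gpre] := bad_pre j.+1.
  have gnext k : k <= j -> g k = next (pre k).
    by move=> kj; rewrite gpre ?nth_pre ?size_pre.
  by rewrite -gnext ?(ltnW ij) // -gnext //; exact: gbad.
move=> n g gbad gF; apply: (nextP _ (bad_pre n)).2; exists g => // i.
rewrite size_rcons size_pre ltnS leq_eqVlt nth_rcons size_pre.
by case/orP => [/eqP->|ilt]; rewrite ?ltnn ?eqxx // ilt nth_pre // gF.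
Qed.

Theorem higman f : exists i j, i < j /\ subseq (f i) (f j).
Proof.
apply: contrapT => good.
have fbad : bad f by move=> i j ij; apply/negP => sij; apply: good; exists i, j.
have [F Fbad Fmin] := minimal_bad_seq fbad.
have [a /infinitely_often_subseq[phi [phi_mono phi_a]]] :=
  finite_infinitely_often (fun n => ohead (F n)).
pose n0 := phi 0.
have phi_ge k : n0 <= phi k by apply: ltnW_homo.
(* Replacing F from n0 on by the tails of the F (phi k), which all share the
   head a, keeps the sequence bad but shortens its n0-th term. *)
pose g i := if i < n0 then F i else behead (F (phi (i - n0))).
have gbad : bad g.
  move=> i j ij; rewrite /g; case: ltnP => [i_n0|n0_i]; case: ltnP => [j_n0|n0_j].
  - exact: Fbad.
  - apply: contra (Fbad i _ (leq_trans i_n0 (phi_ge (j - n0)))) => sub.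
    by apply: subseq_trans sub _; rewrite -drop1 drop_subseq.
  - by have := leq_ltn_trans n0_i (ltn_trans ij j_n0); rewrite ltnn.
  - have lt_ij : i - n0 < j - n0 by rewrite ltn_sub2rE.
    apply: contra (Fbad _ _ (phi_mono _ _ lt_ij)).
    have := phi_a (j - n0); rewrite -(phi_a (i - n0)) /=.
    case: (F (phi (i - n0))) (bad_neq_nil (phi (i - n0)) Fbad) => // x s _.
    case: (F (phi (j - n0))) => //= y t [->] sub.
    by rewrite eqxx.
have g_F i : i < n0 -> g i = F i by move=> i_n0; rewrite /g i_n0.
have := Fmin n0 g gbad g_F; rewrite /g ltnn subnn.
by case: (F n0) (bad_neq_nil n0 Fbad) => //= x s _; rewrite ltnn.
Qed.
End Higman.

Lemma subseq_pmap (T U : eqType) (h : T -> option U) s1 s2 :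
  subseq s1 s2 -> subseq (pmap h s1) (pmap h s2).
Proof.
elim: s2 s1 => [|y s2 IH] [|x s1] //=; rewrite ?sub0seq //.
case: eqP => [<- /IH | _ /IH]; first by case: (h x) => //= u; rewrite eqxx.
by case: (h y) => [u|] //= sub; apply: subseq_trans sub (subseq_cons _ _).
Qed.

Lemma higman2 (T : finType) (f g : nat -> seq T) :
  exists i j, i < j /\ subseq (f i) (f j) /\ subseq (g i) (g j).
Proof.
pose fg n : seq (T + T) := map inl (f n) ++ map inr (g n).
have [i [j [ij sub]]] := higman fg; exists i, j; split=> //.
pose getl (z : T + T) := if z is inl x then Some x else None.
pose getr (z : T + T) := if z is inr y then Some y else None.
have fgl n : pmap getl (fg n) = f n.
  rewrite pmap_cat (map_pK (_ : pcancel inl getl)) //.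
  by elim: (g n) => [|y s IH] /=; rewrite ?cats0.
have fgr n : pmap getr (fg n) = g n.
  rewrite pmap_cat (map_pK (_ : pcancel inr getr)) //.
  by elim: (f n).
by rewrite -fgl -[f j]fgl -fgr -[g j]fgr !subseq_pmap.
Qed.

Definition ratio_lt (p q : nat * nat) := p.1 * q.2 < q.1 * p.2.

Lemma ratio_lt_trans q p r : ratio_lt p q -> ratio_lt q r -> ratio_lt p r.
Proof.
case: p q r => [a b] [a' b'] [a'' b'']; rewrite /ratio_lt /= => lt1 lt2.
have b_pos : 0 < b by case: b lt1 => //; rewrite muln0.
have b'_pos : 0 < b' by case: b' lt1 lt2 => // _; rewrite muln0.
have h1 : a * b' * b'' <= a' * b * b'' := leq_mul (ltnW lt1) (leqnn _).
have h2 : a' * b'' * b < a'' * b' * b by rewrite ltn_pmul2r.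
by rewrite -(ltn_pmul2r b'_pos); nia.
Qed.

Lemma ratio_lt_mediant a b c d :
  ratio_lt (a, b) (a + c, b + d) -> ratio_lt (a + c, b + d) (c, d).
Proof. rewrite /ratio_lt /=; nia. Qed.

Section MaxRatio.
Variable S : nat -> nat -> Prop.
Hypothesis S_pos : forall a b, S a b -> 0 < b.
Hypothesis S_embed : forall s t : nat -> nat, (forall n, S (s n) (t n)) ->
  exists i j c d, [/\ i < j, S c d \/ c = 0 /\ d = 0, s j = s i + c & t j = t i + d].

Lemma max_ratio_attained a1 b1 : S a1 b1 ->
  exists a0 b0, S a0 b0 /\ forall a b, S a b -> a * b0 <= a0 * b.
Proof.
move=> Sab1; apply: contrapT => nomax.
pose inS (p : nat * nat) := S p.1 p.2.
pose sz (p : nat * nat) := p.1 + p.2.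
have /choice[next nextP] : forall p, exists q, inS p ->
    [/\ inS q, ratio_lt p q & forall q', inS q' -> ratio_lt p q' -> sz q <= sz q'].
  move=> p; have [Sp|] := pselect (inS p); last by exists p.
  have better : exists n, `[< exists q, [/\ inS q, ratio_lt p q & sz q = n] >].
    have : ~ forall a b, S a b -> a * p.2 <= p.1 * b.
      by move=> pmax; apply: nomax; exists p.1, p.2.
    move=> /existsNP[a /existsNP[b /not_implyP[Sab /negP]]]; rewrite -ltnNge => pab.
    by exists (sz (a, b)); apply/asboolP; exists (a, b).
  case: (ex_minnP better) => n /asboolP[q [Sq pq <-]] qmin.
  by exists q => _; split=> // q' Sq' pq'; apply/qmin/asboolP; exists q'.
pose s n := iter n next (a1, b1).
have s_in n : inS (s n) by elim: n => [|n /nextP[]].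
have s_mono : {homo s : m n / m < n >-> ratio_lt m n}.
  apply: homo_ltn => [q p r|n]; first exact: ratio_lt_trans.
  by have [] := nextP _ (s_in n).
have [i [j [c [d [ij Scd sj tj]]]]] :=
  @S_embed (fun n => (s n).1) (fun n => (s n).2) s_in.
have := s_mono _ _ ij; rewrite /ratio_lt sj tj.
case: Scd => [Scd lt_ij | [-> ->]]; last by rewrite !addn0 ltnn.
case: j ij sj tj lt_ij => // k ij sj tj lt_ij.
have lt_cd : ratio_lt (s k.+1) (c, d).
  by rewrite [s k.+1]surjective_pairing sj tj; apply: ratio_lt_mediant.
have [_ _ kmin] := nextP _ (s_in k).
have := kmin (c, d) Scd (ratio_lt_trans (s_mono _ _ (ltnSn k)) lt_cd).
by rewrite /sz -/(s k.+1) sj tj /=; have := S_pos (s_in i); lia.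
Qed.
End MaxRatio.

Lemma finite_nat_bounded (L : set nat) :
  finite_set L -> exists N, forall n, L n -> n <= N.
Proof.
move=> /finite_fsetP[F FE]; exists (\max_(n <- finmap.enum_fset F) n) => n.
by rewrite FE /= => inF; apply: (@leq_bigmax_seq _ _ _ id).
Qed.

Lemma finite_pos_extrema (L : set nat) :
  finite_set L -> (exists n, L n /\ 0 < n) ->
  exists n1 n2, [/\ L n1, L n2, 0 < n2 & forall n, L n -> 0 < n -> n2 <= n <= n1].
Proof.
move=> /finite_nat_bounded[N LN] [n [Ln n_pos]].
have Lpos : exists n, `[< L n /\ 0 < n >] by exists n; apply/asboolP.
have Lbound m : `[< L m /\ 0 < m >] -> m <= N by move/asboolP => [/LN].
case: (ex_maxnP Lpos Lbound) => n1 /asboolP[Ln1 _] n1max.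
case: (ex_minnP Lpos) => n2 /asboolP[Ln2 n2_pos] n2min.
exists n1, n2; split=> // m Lm m_pos.
by rewrite n2min ?n1max //; apply/asboolP.
Qed.

Lemma ler_ratio_nat (F : numFieldType) a b c d :
  0 < b -> 0 < d -> a * d <= c * b ->
  (a%:R / b%:R <= c%:R / d%:R :> F)%R.
Proof.
move=> b_pos d_pos le_ad_cb.
by rewrite ler_pdivrMr ?ltr0n // mulrAC ler_pdivlMr ?ltr0n // -!natrM ler_nat.
Qed.

Section Rho.
Variable L : set nat.

Lemma rho_max_min n1 n2 : L n1 -> L n2 -> 0 < n2 ->
  (forall n, L n -> 0 < n -> n2 <= n <= n1) -> rho L = (n1%:R / n2%:R)%:E%R.
Proof.
move=> Ln1 Ln2 n2_pos ext.
have n1_pos : 0 < n1 by case/andP: (ext n2 Ln2 n2_pos) => _; apply: leq_trans.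
rewrite /rho; case: pselect => [Lpos|]; last by case; exists n2.
set S := [set _ | _ in _]%classic.
have supE : ereal_sup S = n1%:R%:E%R.
  apply/eqP; rewrite eq_le ereal_sup_ubound ?andbT; last by exists n1.
  apply: ge_ereal_sup => _ [m [Lm m_pos] <-].
  by rewrite lee_fin ler_nat; case/andP: (ext m Lm m_pos).
have infE : ereal_inf S = n2%:R%:E%R.
  apply/eqP; rewrite eq_le ereal_inf_lbound /=; last by exists n2.
  apply: le_ereal_inf_tmp => _ [m [Lm m_pos] <-].
  by rewrite lee_fin ler_nat; case/andP: (ext m Lm m_pos).
by rewrite supE infE /= -EFinM.
Qed.

Lemma rho_nopos : ~ (exists n, L n /\ 0 < n) -> rho L = 0%E.
Proof. by rewrite /rho; case: pselect. Qed.

Lemma rho_lt_pinfty : finite_set L -> (rho L < +oo)%E.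
Proof.
move=> Lfin; have [Lpos|Lnopos] := pselect (exists n, L n /\ 0 < n).
  have [n1 [n2 [Ln1 Ln2 n2_pos ext]]] := finite_pos_extrema Lfin Lpos.
  by rewrite (rho_max_min Ln1 Ln2 n2_pos ext) ltry.
by rewrite rho_nopos.
Qed.

End Rho.

Section Congruence.
Variables (T : Type) (R : seq T -> seq T -> Prop).
Local Notation "a ~ b" := (presEq R a b) (at level 70).

Lemma presEq_ctx u v a b : a ~ b -> u ++ a ++ v ~ u ++ b ++ v.
Proof.
elim=> {a b} [a|a b _ IH|a b c _ IH1 _ IH2|u0 v0 a b r].
- exact: presEq_refl.
- exact: presEq_sym.
- exact: presEq_trans IH2.
- have assoc t : u ++ (u0 ++ t ++ v0) ++ v = (u ++ u0) ++ t ++ (v0 ++ v).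
    by rewrite !catA.
  by rewrite !assoc; apply: presEq_rel.
Qed.

Lemma presEq_cat a a' b b' : a ~ a' -> b ~ b' -> a ++ b ~ a' ++ b'.
Proof.
move=> aa' bb'; apply: (@presEq_trans _ _ _ (a' ++ b)).
  by have := presEq_ctx [::] b aa'.
by have := presEq_ctx a' [::] bb'; rewrite !cats0.
Qed.

End Congruence.

Section Twists.
Variables (X : eqType) (R : seq X -> seq X -> Prop) (C : nat).
Local Notation "a ~ b" := (presEq R a b) (at level 70).
Variable tw : seq X -> X -> C.-bseq X.
Hypothesis twP : forall w x, tw w x ++ w ~ w ++ [:: x].

(* [twists w u] lists the words z_1, ..., z_k with z_i (w u_1 .. u_(i-1)) ~
   (w u_1 .. u_(i-1)) u_i, so that w u ~ z_k .. z_1 w. *)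
Fixpoint twists w u : seq (C.-bseq X) :=
  if u is x :: u' then tw w x :: twists (rcons w x) u' else [::].

Lemma size_twists w u : size (twists w u) = size u.
Proof. by elim: u w => //= x u IH w; rewrite IH. Qed.

Lemma twists_subseq u w S : subseq S (twists w u) ->
  exists p, size p + size S = size u /\ w ++ u ~ flatten (rev (map val S)) ++ w ++ p.
Proof.
elim: u w S => [|x u IH] w S /=.
  by case: S => // _; exists [::]; rewrite !cats0; split=> //; exact: presEq_refl.
have skip S' : subseq S' (twists (rcons w x) u) -> exists p, size p + size S' =
    (size u).+1 /\ w ++ x :: u ~ flatten (rev (map val S')) ++ w ++ p.
  move/IH=> [p [szp e]]; exists (x :: p); split; first by rewrite /= addSn szp.
  by rewrite -cat_rcons -[w ++ x :: p]cat_rcons.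
case: S => [_|z S]; first exact: skip (sub0seq _).
case: eqP => [-> /IH[p [szp e]] | _ /skip //].
exists p; split; first by rewrite /= addnS szp.
rewrite -cat_rcons; apply: presEq_trans e _.
rewrite map_cons rev_cons flatten_rcons -!catA.
apply: presEq_cat (presEq_refl R _) _; rewrite catA -cats1.
exact: presEq_cat (presEq_sym (twP w x)) (presEq_refl R p).
Qed.

Lemma twists_embed u u' : subseq (twists [::] u) (twists [::] u') ->
  exists p, size u' = size u + size p /\ u' ~ u ++ p.
Proof.
move=> sub; have [p0 [szp0 eu]] := twists_subseq (subseq_refl (twists [::] u)).
have [p [szp eu']] := twists_subseq sub.
rewrite size_twists in szp0 szp.
have p0_nil : p0 = [::] by apply/eqP; rewrite -size_eq0; lia.
exists p; split; first lia.
rewrite p0_nil /= cats0 in eu; apply: presEq_trans eu' _.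
exact: presEq_cat (presEq_sym eu) (presEq_refl R p).
Qed.

End Twists.

Section NormalizingCancellativeBF.
Variables (X : finType) (R : seq X -> seq X -> Prop).
Local Notation "a ~ b" := (presEq R a b) (at level 70).
Hypotheses (nrm : normalizing R) (canc : cancellative R) (bf : BF R).

Lemma presEq_size_bounded a : exists N, forall b, b ~ a -> size b <= N.
Proof.
have [N LN] := finite_nat_bounded (bf a).
by exists N => b ba; apply: LN; exists b.
Qed.

Lemma presEq_nil w : w ~ [::] -> w = [::].
Proof.
move=> w1; have [N HN] := presEq_size_bounded [::].
have w_pow n : flatten (nseq n w) ~ [::].
  by elim: n => [|n IH]; [exact: presEq_refl | exact: presEq_cat w1 IH].
apply/eqP; rewrite -size_eq0 -leqn0; have := HN _ (w_pow N.+1).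
rewrite size_flatten /shape map_nseq sumn_nseq.
by case: (size w) => // k; rewrite mulSn; lia.
Qed.

Lemma letter_size_bounded : exists C, forall x b, b ~ [:: x] -> size b <= C.
Proof.
have /choice[N HN] := fun x : X => presEq_size_bounded [:: x].
by exists (\max_x N x) => x b bx; apply: leq_trans (HN x b bx) (leq_bigmax _).
Qed.

(* Pushing the letters of z one by one to the right of w: none of them
   disappears, since a letter cannot be equal to the empty word. *)
Lemma normalizing_shift z w : exists S, size z <= size S /\ z ++ w ~ w ++ S.
Proof.
elim: z => [|t z [S [szS zwS]]].
  by exists [::]; rewrite cats0; split=> //; exact: presEq_refl.
have [s tws] := (nrm w).2 [:: t].
have s_pos : 0 < size s.
  rewrite lt0n size_eq0; apply/eqP => s0; move: tws.
  by rewrite s0 cats0 -{2}[w]cat0s => /(canc w _ _).2 /presEq_nil.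
exists (s ++ S); split; first by rewrite /= size_cat; lia.
rewrite -cat1s -catA; apply: presEq_trans (presEq_cat (presEq_refl R _) zwS) _.
by rewrite !catA; apply: presEq_cat tws (presEq_refl R S).
Qed.

Lemma twist_exists :
  exists C (tw : seq X -> X -> C.-bseq X), forall w x, tw w x ++ w ~ w ++ [:: x].
Proof.
have [C HC] := letter_size_bounded; exists C.
have /choice[tw twP] : forall wx : seq X * X, exists z : C.-bseq X,
    z ++ wx.1 ~ wx.1 ++ [:: wx.2].
  move=> [w x]; have [z wxz] := (nrm w).1 [:: x].
  have [S [szS zwS]] := normalizing_shift z w.
  have xS : [:: x] ~ S by apply: (canc w _ _).1; exact: presEq_trans wxz zwS.
  have szC : size z <= C by apply: leq_trans szS (HC x S (presEq_sym xS)).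
  by exists (Bseq szC); exact: presEq_sym.
by exists (fun w x => tw (w, x)) => w x; exact: twP (w, x).
Qed.

Lemma presEq_seq_embed (u v : nat -> seq X) : (forall n, u n ~ v n) ->
  exists i j p q, [/\ i < j, p ~ q, size (u j) = size (u i) + size p
                           & size (v j) = size (v i) + size q].
Proof.
move=> uv; have [C [tw twP]] := twist_exists.
have [i [j [ij [subu subv]]]] :=
  higman2 (fun n => twists tw [::] (u n)) (fun n => twists tw [::] (v n)).
have [p [szp ep]] := twists_embed twP subu.
have [q [szq eq]] := twists_embed twP subv.
exists i, j, p, q; split=> //; apply: (canc (u i) p q).1.
apply: presEq_trans (presEq_sym ep) _; apply: presEq_trans (uv j) _.
apply: presEq_trans eq _.
exact: presEq_cat (presEq_sym (uv i)) (presEq_refl R q).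
Qed.

End NormalizingCancellativeBF.

Lemma elasticity_max (X : Type) (R : seq X -> seq X -> Prop) a0 :
  (forall a, (rho (lengthSet R a) <= rho (lengthSet R a0))%E) ->
  elasticity R = rho (lengthSet R a0).
Proof.
move=> a0max; apply/eqP; rewrite eq_le ereal_sup_ubound ?andbT; last by exists a0.
by apply: ge_ereal_sup => _ [a _ <-]; exact: a0max.
Qed.

Section Elasticity.
Variables (X : finType) (R : seq X -> seq X -> Prop).
Local Notation "a ~ b" := (presEq R a b) (at level 70).
Hypotheses (nrm : normalizing R) (canc : cancellative R) (bf : BF R).

Definition presEq_sizes a b :=
  exists u v, [/\ u ~ v, size u = a, size v = b & 0 < b].

Lemma presEq_sizes_embed (s t : nat -> nat) :
  (forall n, presEq_sizes (s n) (t n)) ->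
  exists i j c d, [/\ i < j, presEq_sizes c d \/ c = 0 /\ d = 0,
                      s j = s i + c & t j = t i + d].
Proof.
move=> st; have /choice[uv uvP] : forall n, exists uv : seq X * seq X,
    [/\ uv.1 ~ uv.2, size uv.1 = s n, size uv.2 = t n & 0 < t n].
  by move=> n; have [u [v uv]] := st n; exists (u, v).
have [|i [j [p [q [ij pq szu szv]]]]] :=
  presEq_seq_embed nrm canc bf (u := fun n => (uv n).1) (v := fun n => (uv n).2).
  by move=> n; have [] := uvP n.
exists i, j, (size p), (size q).
have [_ <- <- _] := uvP i; have [_ <- <- _] := uvP j; split=> //.
have [q_nil|q_neq_nil] := eqVneq q [::].
  by right; move: pq; rewrite q_nil => /(presEq_nil bf) ->.
by left; exists p, q; split=> //; rewrite lt0n size_eq0.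
Qed.

Lemma presEq_sizes_pos a b : presEq_sizes a b -> 0 < b.
Proof. by case=> u [v []]. Qed.

Lemma lengthSet_presEq_sizes a m n :
  lengthSet R a m -> lengthSet R a n -> 0 < n -> presEq_sizes m n.
Proof.
move=> [u [ua <-]] [v [va <-]] n_pos; exists u, v; split=> //.
exact: presEq_trans ua (presEq_sym va).
Qed.

Lemma rho_lengthSet_max :
  exists a0, forall a, (rho (lengthSet R a) <= rho (lengthSet R a0))%E.
Proof.
have [[a1 [b1 Sab1]]|noS] := pselect (exists a b, presEq_sizes a b); last first.
  have rho0 a : rho (lengthSet R a) = 0%E.
    apply: rho_nopos => -[n [Ln n_pos]]; apply: noS.
    by exists n, n; apply: (lengthSet_presEq_sizes Ln Ln n_pos).
  by exists [::] => a; rewrite !rho0.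
have [a0 [b0 [[u0 [v0 [uv0 <- <- b0_pos]]] max0]]] :=
  max_ratio_attained presEq_sizes_pos presEq_sizes_embed Sab1.
have Lu0 : lengthSet R u0 (size u0) by exists u0; split=> //; exact: presEq_refl.
have Lv0 : lengthSet R u0 (size v0) by exists v0; split=> //; exact: presEq_sym.
have [n1 [n2 [Ln1 Ln2 n2_pos ext0]]] :=
  finite_pos_extrema (bf u0) (ex_intro _ _ (conj Lv0 b0_pos)).
have le_u0 : ((size u0)%:R / (size v0)%:R <= n1%:R / n2%:R :> Rdefinitions.R)%R.
  apply: ler_ratio_nat => //; apply: leq_mul; last by case/andP: (ext0 _ Lv0 b0_pos).
  by case: (posnP (size u0)) => [->//|u0_pos]; case/andP: (ext0 _ Lu0 u0_pos).
exists u0 => a; rewrite (rho_max_min Ln1 Ln2 n2_pos ext0).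
have [apos|anopos] := pselect (exists n, lengthSet R a n /\ 0 < n); last first.
  by rewrite rho_nopos // lee_fin divr_ge0.
have [m1 [m2 [Lm1 Lm2 m2_pos extm]]] := finite_pos_extrema (bf a) apos.
rewrite (rho_max_min Lm1 Lm2 m2_pos extm) lee_fin; apply: le_trans le_u0.
by apply: ler_ratio_nat => //; apply/max0/(lengthSet_presEq_sizes Lm1 Lm2).
Qed.
End Elasticity.

Theorem proposition5p4 (X : finType) (R : seq X -> seq X -> Prop) :
  normalizing R -> cancellative R -> BF R -> accepted_elasticity R.
Proof.
move=> nrm canc bf; have [a0 a0max] := rho_lengthSet_max nrm canc bf.
by exists a0; rewrite (elasticity_max a0max); split=> //; exact: rho_lt_pinfty.
Qed.
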